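(* There are infinitely many positive integers $n$ with $V(n+1)>V(n)$, and there are infinitely many positive integers $n$ with $V(n+1)<V(n)$.
   Context: For a positive integer $n$, an integer $a$ is called regular modulo $n$ if there exists an integer $x$ with $a^2x\equiv a \pmod n$. Let $V(n)$ denote the number of integers $a$ with $1\le a\le n$ that are regular modulo $n$. (Known fact: $V$ is multiplicative, $V(1)=1$, and $V(p^{\alpha})=p^{\alpha}-p^{\alpha-1}+1$ for a prime $p$ and $\alpha\ge1$.) *)

From mathcomp Require Import all_boot.
Set Implicit Arguments. Unset Strict Implicit. Unset Printing Implicit Defensive.

(* a is regular modulo n: there is an integer x with a^2 x = a (mod n).
   Over nat this is equivalent: any integer x may be replaced by its
   nonnegative representative mod n. *)
Definition regular (n a : nat) : Prop :=
  exists x : nat, a ^ 2 * x = a %[mod n].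

(* Decidable version for n >= 1: the witness can be taken in 0..n-1. *)
Definition regularb (n a : nat) : bool :=
  [exists x : 'I_n, a ^ 2 * x == a %[mod n]].

Lemma regularP n a : 0 < n -> reflect (regular n a) (regularb n a).
Proof.
move=> Hn; apply: (iffP existsP) => [[x /eqP Hx]|[x Hx]]; first by exists x.
exists (Ordinal (ltn_pmod x Hn)); apply/eqP => /=.
by rewrite -modnMmr modn_mod modnMmr.
Qed.

(* V(n) = number of a with 1 <= a <= n that are regular modulo n
   (meaningful for n >= 1, which is all the statement uses). *)
Definition V (n : nat) : nat :=
  #|[set a : 'I_n.+1 | (0 < (a : nat)) && regularb n a]|.

From mathcomp Require Import all_boot.
From mathcomp Require Import zify.

(* Since 0 is never counted, V n <= n, and every a that is not regular
   modulo n lowers this bound by one (V_le_nonregular).  A residue a is not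
   regular modulo n as soon as some divisor d of n kills a^2 but not a
   (not_regular_nilpotent).  Conversely, modulo a prime p every a in 1..p
   is regular by Fermat's little theorem, so V p = p.

   Rise: for every prime p, V (p - 1) <= p - 1 < p = V p.
   Fall: if 4 | m and m >= 8, then 2 and m/2 are not regular modulo m, so
   V m <= m - 2; hence for a prime p = 3 (mod 4) with p >= 7,
   V (p + 1) <= p - 1 < p = V p.  There are infinitely many primes
   p = 3 (mod 4), by Euclid's argument applied to 4 N! - 1. *)

Lemma V_le_nonregular n (B : {set 'I_n.+1}) :
  (forall a, a \in B -> 0 < (a : nat) /\ ~ regular n a) -> V n <= n - #|B|.
Proof.
move=> nonregB.
have ord0_notin_B : ord0 \notin B by apply/negP => /nonregB [].
have card_excl : #|B| + #|~: (ord0 |: B)| = n.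
  by have := cardsC (ord0 |: B); rewrite cardsU1 ord0_notin_B card_ord add1n addSn => -[].
rewrite -{2}card_excl addKn; apply: subset_leq_card; apply/subsetP => a.
rewrite !inE => /andP[a_gt0 rega]; apply/negP => /orP[/eqP a0 | aB].
  by rewrite a0 in a_gt0.
have n_gt0 : 0 < n := leq_trans a_gt0 (ltnSE (ltn_ord a)).
by have [_ []] := nonregB a aB; apply/(regularP _ n_gt0).
Qed.

Lemma V_le n : V n <= n.
Proof. by rewrite -[leqRHS]subn0 -(cards0 'I_n.+1) V_le_nonregular // => a; rewrite inE. Qed.

(* If d | n, d | a^2 and d does not divide a, then a is not regular modulo n:
   reducing a^2 x = a modulo d would give a = 0 modulo d. *)
Lemma not_regular_nilpotent n d a :
  d %| n -> d %| a ^ 2 -> ~~ (d %| a) -> ~ regular n a.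
Proof.
move=> dn da2 /negP nda [x /(congr1 (modn^~ d))].
rewrite /= !modn_dvdm // -modnMml (eqP da2) mul0n mod0n => /esym/eqP.
by rewrite -/(d %| a).
Qed.

Lemma V_prime p : prime p -> V p = p.
Proof.
move=> p_pr; have p_gt0 := prime_gt0 p_pr; have p_gt1 := prime_gt1 p_pr.
apply/eqP; rewrite eqn_leq V_le /= /V.
apply: (leq_trans _ (subset_leq_card (_ : [set~ ord0] \subset _))).
  by rewrite cardsC1 card_ord.
apply/subsetP => a; rewrite !inE => a_ne0.
have a_gt0 : 0 < (a : nat).
  by rewrite lt0n; apply: contra a_ne0 => /eqP a0; apply/eqP/val_inj.
rewrite a_gt0; apply/(regularP _ p_gt0); exists (a ^ (p - 2)).
by rewrite -expnD subnKC // fermat_little.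
Qed.

(* For m = 4k with k > 1, the residues 2 (killed by d = 4) and m/2 = 2k
   (killed by d = m) are not regular, so V m <= m - 2. *)
Lemma V_mul4 k : 1 < k -> V (4 * k) <= 4 * k - 2.
Proof.
move=> k_gt1; set m := 4 * k.
have two_lt : 2 < m.+1 by rewrite /m; lia.
have half_lt : 2 * k < m.+1 by rewrite /m; lia.
set B := [set Ordinal two_lt; Ordinal half_lt].
have cardB : #|B| = 2.
  rewrite cards2; case: eqP => // /(congr1 val) /=; lia.
rewrite -cardB; apply: V_le_nonregular => a; rewrite !inE => /orP[] /eqP -> /=.
- split=> //; apply: (@not_regular_nilpotent _ 4) => //; exact: dvdn_mulr.
- split; first lia.
  apply: (@not_regular_nilpotent _ m); rewrite //.
    by apply/dvdnP; exists k; rewrite /m; lia.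
  by apply/negP => /dvdn_leq; rewrite /m; lia.
Qed.

(* Every m = 3 (mod 4) has a prime divisor p = 3 (mod 4), by strong
   induction: the least prime factor of m is odd, and if it is 1 (mod 4)
   then the complementary factor is a smaller number that is 3 (mod 4). *)
Lemma prime_dvd_3mod4 m :
  m %% 4 = 3 -> exists p, [/\ prime p, p %| m & p %% 4 = 3].
Proof.
elim/ltn_ind: m => m IH m_mod4.
have m_gt1 : 1 < m by case: m m_mod4 {IH} => [|[|]].
have p_pr := pdiv_prime m_gt1; case/dvdnP: (pdiv_dvd m) => m' m_eq.
set p := pdiv m in p_pr m_eq *.
have [p_mod4 | p_mod4] := eqVneq (p %% 4) 3; first by exists p; rewrite m_eq dvdn_mull.
have p_odd : ~~ (2 %| p).
  rewrite (dvdn_prime2 (isT : prime 2) p_pr); apply/eqP => p2.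
  by move: m_mod4; rewrite m_eq p2; lia.
have {p_odd}{}p_mod4 : p %% 4 = 1 by move: p_mod4 p_odd; lia.
have m'_mod4 : m' %% 4 = 3 by move: m_mod4; rewrite m_eq -modnMm p_mod4 muln1 modn_mod.
have m'_lt : m' < m.
  have := prime_gt1 p_pr; rewrite m_eq; move: m'_mod4; nia.
have [q [q_pr qm' q_mod4]] := IH m' m'_lt m'_mod4.
by exists q; rewrite m_eq dvdn_mulr.
Qed.

Lemma prime_3mod4_above N : exists p, [/\ prime p, N < p & p %% 4 = 3].
Proof.
have fact_pos := fact_gt0 N.
have mod4 : (4 * N`! - 1) %% 4 = 3.
  by rewrite (_ : 4 * N`! - 1 = 3 + (N`! - 1) * 4) ?modnMDl //; lia.
have [p [p_pr p_dvd p_mod4]] := prime_dvd_3mod4 _ mod4.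
exists p; split=> //; rewrite ltnNge; apply/negP => p_le.
have p_dvd_fact : p %| 4 * N`! by rewrite dvdn_mull // dvdn_fact // prime_gt0.
have : p %| 4 * N`! - (4 * N`! - 1) by rewrite dvdn_sub.
by rewrite (_ : _ - _ = 1); [rewrite dvdn1 => /eqP p1; rewrite p1 in p_pr | lia].
Qed.

Theorem proposition1 :
  (forall N : nat, exists n : nat, (N < n) /\ V n < V n.+1) /\
  (forall N : nat, exists n : nat, (N < n) /\ V n.+1 < V n).
Proof.
split=> N.
-
  have [p Np p_pr] := prime_above N.+1.
  exists p.-1; rewrite prednK ?prime_gt0 // (V_prime _ p_pr).
  by have := V_le p.-1; lia.
-
  have [p [p_pr Np p_mod4]] := prime_3mod4_above (N + 7).
  exists p; rewrite (V_prime _ p_pr).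
  have p1_eq : p.+1 = 4 * (p.+1 %/ 4) by have := divn_eq p 4; rewrite p_mod4; lia.
  by rewrite p1_eq; have := V_mul4 (p.+1 %/ 4); lia.
Qed.
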